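(* If an $n$-agent network is $k$-redundant with $k\ge 1$, then $$\mathcal X^*=\bigcap_{i=1}^n\{x\in\mathbb R^d: A_i^\top A_ix=A_i^\top b_i\}.$$
   Context: An $n$-agent network: agents $\mathcal V=\{1,\dots,n\}$, each agent $i$ having real matrices $A_i\in\mathbb R^{r_i\times d}$, $b_i\in\mathbb R^{r_i}$; $A$, $b$ are the vertical stackings of the $A_i$, $b_i$, and $\mathcal X^*=\arg\min_x\|Ax-b\|_2^2=\arg\min_x\sum_{i=1}^n\|A_ix-b_i\|_2^2$. The network is $k$-redundant ($k\in\{0,1,\dots,n-1\}$) if for any $\mathcal S_1,\mathcal S_2\subset\mathcal V$ with $|\mathcal S_1|=|\mathcal S_2|=n-k$, $\arg\min_x\sum_{i\in\mathcal S_1}\|A_ix-b_i\|_2^2=\arg\min_x\sum_{i\in\mathcal S_2}\|A_ix-b_i\|_2^2$. *)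

From HB Require Import structures.
From mathcomp Require Import all_boot all_order all_algebra.
From mathcomp Require Import reals.
Set Implicit Arguments. Unset Strict Implicit. Unset Printing Implicit Defensive.
Import Order.TTheory GRing.Theory Num.Theory.
Local Open Scope ring_scope.

Definition sqnorm (R : realType) (m : nat) (v : 'cV[R]_m) : R :=
  \sum_(j < m) (v j 0) ^+ 2.

Definition cost (R : realType) (n d : nat) (r : 'I_n -> nat)
    (A : forall i : 'I_n, 'M[R]_(r i, d)) (b : forall i : 'I_n, 'cV[R]_(r i))
    (S : {set 'I_n}) (x : 'cV[R]_d) : R :=
  \sum_(i in S) sqnorm (A i *m x - b i).

Definition is_argmin (R : realType) (n d : nat) (r : 'I_n -> nat)
    (A : forall i : 'I_n, 'M[R]_(r i, d)) (b : forall i : 'I_n, 'cV[R]_(r i))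
    (S : {set 'I_n}) (x : 'cV[R]_d) : Prop :=
  forall y : 'cV[R]_d, cost A b S x <= cost A b S y.

Definition k_redundant (R : realType) (n d : nat) (r : 'I_n -> nat)
    (A : forall i : 'I_n, 'M[R]_(r i, d)) (b : forall i : 'I_n, 'cV[R]_(r i))
    (k : nat) : Prop :=
  forall S1 S2 : {set 'I_n}, #|S1| = (n - k)%N -> #|S2| = (n - k)%N ->
    forall x : 'cV[R]_d, is_argmin A b S1 x <-> is_argmin A b S2 x.

From HB Require Import structures.
From mathcomp Require Import all_boot all_order all_algebra.
From mathcomp Require Import reals.
From mathcomp Require Import ring zify.
Import Order.TTheory GRing.Theory Num.Theory.
Local Open Scope ring_scope.

(* For every set S of agents, the minimisers of the cost of S are exactly the
   solutions of the normal equations sum_(i in S) A_i^T (A_i x - b_i) = 0, and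
   such solutions exist.  A minimiser z for one (n-k)-subset therefore
   minimises every (n-k)-subset, i.e. the vectors g_i = A_i^T (A_i z - b_i) sum
   to 0 over every (n-k)-subset.  As 1 <= n-k < n, exchanging one agent of such
   a subset shows that all g_i are equal, hence all 0.  Finally a minimiser x of
   the total cost has A_i x = A_i z for every i, so x solves every agent's
   normal equations too. *)

Section SubsetSums.
Variable T : finType.

Lemma subset_of_card (B : {set T}) m : (m <= #|B|)%N ->
  exists2 U : {set T}, U \subset B & #|U| = m.
Proof.
case/card_geqP=> s [s_uniq s_size sB]; exists [set x in s].
  by apply/subsetP=> x; rewrite inE => /sB.
by rewrite cardsE (card_uniqP s_uniq).
Qed.

Lemma eq_of_const_subset_sums (V : zmodType) (F : T -> V) m c :
    (0 < m < #|T|)%N -> (forall S : {set T}, #|S| = m -> \sum_(i in S) F i = c) ->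
  forall i j, F i = F j.
Proof.
move=> /andP[m_gt0 m_lt] sumF i j; have [-> //|neq_ij] := eqVneq i j.
have : (m.-1 <= #|[set: T] :\ i :\ j|)%N.
  move: m_lt; rewrite -cardsT (cardsD1 i) (cardsD1 j) !inE eq_sym neq_ij /=; lia.
case/subset_of_card=> U sU cardU.
have iU : i \notin U by apply/negP=> /(subsetP sU); rewrite !inE eqxx andbF.
have jU : j \notin U by apply/negP=> /(subsetP sU); rewrite !inE eqxx.
have cardiU : #|i |: U| = m by rewrite cardsU1 iU cardU; lia.
have cardjU : #|j |: U| = m by rewrite cardsU1 jU cardU; lia.
move: (sumF _ cardiU) (sumF _ cardjU).
by rewrite (big_setU1 _ iU) (big_setU1 _ jU) /= => <- /addIr.
Qed.

Lemma subset_sums_eq0 (K : numFieldType) (V : lmodType K) (F : T -> V) m :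
    (0 < m < #|T|)%N -> (forall S : {set T}, #|S| = m -> \sum_(i in S) F i = 0) ->
  forall i, F i = 0.
Proof.
move=> m_bounds sumF i; have /andP[m_gt0 m_lt] := m_bounds.
have [S _ cardS] : exists2 S : {set T}, S \subset [set: T] & #|S| = m.
  by apply: subset_of_card; rewrite cardsT ltnW.
have := sumF S cardS.
rewrite (eq_bigr (fun=> F i)) => [|j _]; last exact: eq_of_const_subset_sums sumF j i.
rewrite sumr_const cardS -scaler_nat => /eqP.
by rewrite scaler_eq0 pnatr_eq0 eqn0Ngt m_gt0 => /eqP.
Qed.

End SubsetSums.

Section SquaredNorm.
Variables (R : realType) (m : nat).
Implicit Types u v w : 'cV[R]_m.

Lemma sqnorm_ge0 v : 0 <= sqnorm v.
Proof. by apply: sumr_ge0 => j _; rewrite sqr_ge0. Qed.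

Lemma sqnorm_eq0 v : (sqnorm v == 0) = (v == 0).
Proof.
apply/idP/eqP=> [|->]; last by rewrite /sqnorm big1 // => j _; rewrite mxE expr0n.
rewrite /sqnorm psumr_eq0 => [/allP v0|j _]; last exact: sqr_ge0.
apply/matrixP=> j k; rewrite [k]ord1 mxE.
by apply/eqP; rewrite -sqrf_eq0; apply: v0 (mem_index_enum j).
Qed.

Lemma sqnormE v : sqnorm v = (v^T *m v) 0 0.
Proof. by rewrite /sqnorm mxE; apply: eq_bigr => j _; rewrite mxE expr2. Qed.

Lemma sqnormD u w : sqnorm (u + w) = sqnorm u + 2 * (w^T *m u) 0 0 + sqnorm w.
Proof.
rewrite /sqnorm mxE mulr_sumr -!big_split /=.
by apply: eq_bigr => j _; rewrite !mxE; ring.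
Qed.

End SquaredNorm.

Section LeastSquares.
Context {R : realType} {n d : nat} {r : 'I_n -> nat}.
Context {A : forall i : 'I_n, 'M[R]_(r i, d)} {b : forall i : 'I_n, 'cV[R]_(r i)}.
Implicit Types (S : {set 'I_n}) (x y z : 'cV[R]_d).

(* Half the gradient of [cost A b S] (resp. of its i-th summand) at [x]. *)
Definition agent_grad i x := (A i)^T *m (A i *m x - b i).
Definition grad S x := \sum_(i in S) agent_grad i x.

Lemma agent_grad_eq0 i x :
  agent_grad i x = 0 <-> (A i)^T *m A i *m x = (A i)^T *m b i.
Proof.
by rewrite /agent_grad mulmxBr mulmxA; split=> [/eqP|->]; rewrite ?subrr // subr_eq0 => /eqP.
Qed.

Lemma cost_expand S y z :
  cost A b S y = cost A b S z + 2 * ((y - z)^T *m grad S z) 0 0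
                 + \sum_(i in S) sqnorm (A i *m (y - z)).
Proof.
rewrite /cost /grad mulmx_sumr summxE mulr_sumr -!big_split /=.
apply: eq_bigr => i _.
have -> : A i *m y - b i = (A i *m z - b i) + A i *m (y - z).
  by rewrite mulmxBr [RHS]addrC addrA subrK.
by rewrite sqnormD /agent_grad trmx_mul mulmxA.
Qed.

Lemma grad0_is_argmin S z : grad S z = 0 -> is_argmin A b S z.
Proof.
move=> gz0 y; rewrite (cost_expand S y z) gz0 mulmx0 mxE mulr0 addr0 lerDl.
by apply: sumr_ge0 => i _; apply: sqnorm_ge0.
Qed.

Lemma argmin_agree {S z x} : grad S z = 0 -> is_argmin A b S x ->
  {in S, forall i, A i *m x = A i *m z}.
Proof.
move=> gz0 /(_ z); rewrite (cost_expand S x z) gz0 mulmx0 mxE mulr0 addr0 gerDl.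
move=> sum_le0 i iS; apply/eqP; rewrite -subr_eq0 -mulmxBr -sqnorm_eq0; apply/eqP.
have sum0 : \sum_(j in S) sqnorm (A j *m (x - z)) = 0.
  by apply/eqP; rewrite eq_le sum_le0 sumr_ge0 // => j _; apply: sqnorm_ge0.
by move/psumr_eq0P: sum0; apply=> // j _; apply: sqnorm_ge0.
Qed.

Lemma gram_ker {S p} {V : 'M[R]_(d, p)} :
  (\sum_(i in S) (A i)^T *m A i) *m V = 0 -> {in S, forall i, A i *m V = 0}.
Proof.
move=> NV0 i iS; apply/matrixP=> a j; set v := col j V.
have Nv0 : (\sum_(l in S) (A l)^T *m A l) *m v = 0.
  by rewrite /v colE mulmxA NV0 mul0mx.
have : (v^T *m ((\sum_(l in S) (A l)^T *m A l) *m v)) 0 0 = 0.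
  by rewrite Nv0 mulmx0 mxE.
rewrite mulmx_suml mulmx_sumr summxE.
under eq_bigr => l _ do rewrite !mulmxA -trmx_mul -mulmxA -sqnormE.
move=> quad0; have /eqP : sqnorm (A i *m v) = 0.
  by move/psumr_eq0P: quad0; apply=> // l _; apply: sqnorm_ge0.
rewrite sqnorm_eq0 => /eqP /matrixP /(_ a 0); rewrite !mxE => Av0.
by rewrite -[RHS]Av0; apply: eq_bigr => l _; rewrite mxE.
Qed.

Lemma grad_root_exists S : exists z, grad S z = 0.
Proof.
set N := \sum_(i in S) (A i)^T *m A i.
set c := \sum_(i in S) (A i)^T *m b i.
have gradE z : grad S z = N *m z - c.
  rewrite /grad /agent_grad /N /c mulmx_suml -sumrB.
  by apply: eq_bigr => i _; rewrite mulmxBr mulmxA.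
have NT : N^T = N.
  by rewrite /N linear_sum; apply: eq_bigr => i _; rewrite /= trmx_mul trmxK.
(* [c] lies in the range of the symmetric [N], since [ker N] is contained in
   every [ker (A i)]. *)
have : (c^T <= N)%MS.
  rewrite submxE /c linear_sum mulmx_suml big1 // => i iS.
  by rewrite /= trmx_mul trmxK -mulmxA (gram_ker (mulmx_coker N) i iS) mulmx0.
case/submxP=> D cD; exists D^T.
by rewrite gradE -[in N *m _]NT -trmx_mul -cD trmxK subrr.
Qed.

Lemma is_argminP S x : is_argmin A b S x <-> grad S x = 0.
Proof.
split=> [x_min|]; last exact: grad0_is_argmin.
have [z gz0] := grad_root_exists S.
rewrite -gz0; apply: eq_bigr => i iS.
by rewrite /agent_grad (argmin_agree gz0 x_min i iS).
Qed.

Lemma argmin_common_root z : (forall i, agent_grad i z = 0) ->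
  forall x, is_argmin A b [set: 'I_n] x <-> forall i, agent_grad i x = 0.
Proof.
move=> gz0 x; rewrite is_argminP; split=> [x_min i|gx0]; last exact: big1.
have gTz0 : grad [set: 'I_n] z = 0 by apply: big1.
rewrite -(gz0 i) /agent_grad (argmin_agree gTz0 _ i (in_setT i)) //.
exact/is_argminP.
Qed.

Lemma k_redundant_common_root k : (1 <= k)%N -> (k < n)%N ->
  k_redundant A b k -> exists z, forall i, agent_grad i z = 0.
Proof.
move=> k_gt0 k_lt red.
have [S0 _ cardS0] : exists2 S0 : {set 'I_n}, S0 \subset [set: 'I_n] & #|S0| = (n - k)%N.
  by apply: subset_of_card; rewrite cardsT card_ord leq_subr.
have [z gz0] := grad_root_exists S0.
exists z; apply: (@subset_sums_eq0 _ _ _ _ (n - k)); first by rewrite card_ord; lia.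
move=> S cardS; apply/is_argminP/(red S0 S cardS0 cardS)/is_argminP.
exact: gz0.
Qed.

End LeastSquares.

Theorem proposition1 (R : realType) (n d : nat) (r : 'I_n -> nat)
    (A : forall i : 'I_n, 'M[R]_(r i, d)) (b : forall i : 'I_n, 'cV[R]_(r i))
    (k : nat) (hk1 : (1 <= k)%N) (hkn : (k < n)%N) :
  k_redundant A b k ->
  forall x : 'cV[R]_d,
    is_argmin A b [set: 'I_n] x <->
    (forall i : 'I_n, (A i)^T *m A i *m x = (A i)^T *m b i).
Proof.
move=> red x; have [z gz0] := k_redundant_common_root k hk1 hkn red.
rewrite (argmin_common_root z gz0).
by split=> gx0 i; apply/agent_grad_eq0/gx0.
Qed.
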